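(* Let $p\equiv 1\pmod 4$ be a prime with $p\ge 13$, let $\pi\in\mathbb{Z}[i]$ with $\pi\pi^*=p$, and let $C$ be an $(n,k)$ linear code over $G_\pi$. If $C$ corrects all errors of Mannheim weight $2$ or less, then $p^{n-k}\ge 8n^2+1$.
   Context: $G=\mathbb{Z}[i]$ is the ring of Gaussian integers, $\pi^*$ is the complex conjugate of $\pi$, and $G_\pi=G/\pi G$ (a field with $p$ elements). The Mannheim weight of $\beta\in G_\pi$ is $\min\{|a|+|b| : a+bi\equiv\beta \pmod \pi\}$; the Mannheim weight of a vector in $G_\pi^n$ is the sum of the Mannheim weights of its components. An $(n,k)$ linear code over $G_\pi$ is a $k$-dimensional subspace $C\subseteq G_\pi^n$ (so there are $p^{n-k}$ cosets). $C$ corrects all errors of weight $2$ or less if all vectors of $G_\pi^n$ of Mannheim weight at most $2$ lie in pairwise distinct cosets of $C$. *)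

From HB Require Import structures.
From mathcomp Require Import all_boot all_order all_algebra.
From Stdlib Require Import ClassicalEpsilon.
Set Implicit Arguments. Unset Strict Implicit. Unset Printing Implicit Defensive.
Import Order.TTheory GRing.Theory Num.Theory.
Local Open Scope ring_scope.

(* Gaussian integers Z[i]: the pair (a, b) stands for a + b i. *)
Definition gint := (int * int)%type.
Definition gsub (x y : gint) : gint := (x.1 - y.1, x.2 - y.2).
Definition gmul (x y : gint) : gint :=
  (x.1 * y.1 - x.2 * y.2, x.1 * y.2 + x.2 * y.1).
Definition gconj (x : gint) : gint := (x.1, - x.2).

Definition gdvd (d z : gint) : Prop := exists q : gint, z = gmul d q.
Definition gcong (pi z w : gint) : Prop := gdvd pi (gsub z w).

(* G_pi = Z[i]/pi Z[i] is identified with 'F_p through the canonical ring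
   isomorphism Z/pZ -> Z[i]/pi Z[i] induced by the inclusion Z -> Z[i]:
   the element b of 'F_p corresponds to the class of the rational integer b. *)
Definition glift (p : nat) (b : 'F_p) : gint := ((nat_of_ord b)%:Z, 0).

Definition mw_attained (p : nat) (pi : gint) (beta : 'F_p) (n : nat) : Prop :=
  exists a b : int, gcong pi (a, b) (glift beta) /\ (absz a + absz b)%N = n.

Lemma mw_attained_ex (p : nat) (pi : gint) (beta : 'F_p) :
  exists n, (fun m => if excluded_middle_informative (mw_attained pi beta m)
                      then true else false) n.
Proof.
exists (nat_of_ord beta).
case: excluded_middle_informative => // H; exfalso; apply: H.
exists (nat_of_ord beta)%:Z, 0; split; last by rewrite addn0.
exists (0, 0); rewrite /gsub /gmul /=.
by rewrite !mulr0 !subrr.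
Qed.

Definition mweight (p : nat) (pi : gint) (beta : 'F_p) : nat :=
  ex_minn (mw_attained_ex pi beta).

Definition mweight_vec (p : nat) (pi : gint) (n : nat) (x : 'rV['F_p]_n) : nat :=
  (\sum_(j < n) mweight pi (x ord0 j))%N.

Definition corrects2 (p : nat) (pi : gint) (n : nat)
  (C : {vspace 'rV['F_p]_n}) : Prop :=
  forall x y : 'rV['F_p]_n,
    (mweight_vec pi x <= 2)%N -> (mweight_vec pi y <= 2)%N ->
    x != y -> (x - y) \notin C.

From HB Require Import structures.
From mathcomp Require Import all_boot all_order all_algebra all_field.
From mathcomp Require Import zify ring.
From Stdlib Require Import ClassicalEpsilon.
Set Implicit Arguments. Unset Strict Implicit. Unset Printing Implicit Defensive.
Import GRing.Theory.
Local Open Scope ring_scope.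

(* Write pi = a + b i with a^2 + b^2 = p.  Since p does not divide b, the
   element U = -a/b of 'F_p satisfies a + U b = 0 and U^2 = -1: it is the
   image of i under Z[i] -> Z[i]/pi = 'F_p.  The kernel of x + y i |-> x + y U
   lies in pi Z[i] (gauss_kernel), so x + y U has Mannheim weight at most
   |x| + |y|; in particular the elements U^e m (e < 4, m in {1, 2}), the
   images of i^e m, have weight at most m.
   The powers U^e (e < 4) are distinct, and for p > 5 so are the U^e m
   (mon_inj).  From them we build 8 n^2 + 1 distinct vectors of weight <= 2
   supported on at most two coordinates (code_vec, code_vec_inj).
   Finally, vectors lying in pairwise distinct cosets of C inject into a
   complement of C, which has p^(n - dim C) elements (coset_packing). *)

Lemma coset_packing (F : finFieldType) (n : nat) (C : {vspace 'rV[F]_n})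
    (T : {set 'rV[F]_n}) :
  {in T &, forall x y, x != y -> x - y \notin C} ->
  (#|T| <= #|F| ^ (n - \dim C))%N.
Proof.
move=> distinct.
pose r (x : 'rV[F]_n) := x - projv C x.
have r_inj : {in T &, injective r}.
  move=> x y Tx Ty rxy; apply/eqP; apply: contraT => /(distinct x y Tx Ty)/negP[].
  have -> : x - y = r x - r y + (projv C x - projv C y).
    by rewrite /r addrACA opprB subrK addrAC subrr add0r.
  by rewrite rxy subrr add0r rpredB ?memv_proj.
rewrite -(card_in_imset r_inj).
have /subset_leq_card : r @: T \subset (C^C)%VS.
  by apply/subsetP => _ /imsetP [x _ ->]; apply: memv_projC.
by move/leq_trans; apply; rewrite card_vspace dimv_compl dimvf dim_matrix mul1r.
Qed.

Section TwoPointVectors.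
Variables (R : zmodType) (n : nat).

Definition pair_vec (i j : 'I_n) (alpha beta : R) : 'rV[R]_n :=
  \row_k (if k == i then alpha else if k == j then beta else 0).

Lemma pair_vec_neq0 (i j : 'I_n) (alpha beta : R) :
  alpha != 0 -> pair_vec i j alpha beta != 0.
Proof. by apply: contra_neq => /rowP/(_ i); rewrite !mxE eqxx. Qed.

Lemma pair_vec_inj (i j i' j' : 'I_n) (al be al' be' : R) :
  pair_vec i j al be = pair_vec i' j' al' be' ->
  (i <= j)%N -> (i' <= j')%N -> al != 0 -> al' != 0 ->
  (be != 0) = (i < j)%N -> (be' != 0) = (i' < j')%N ->
  [/\ i = i', j = j', al = al' & be = be'].
Proof.
move=> /rowP eq_vec ij ij' al0 al0' be0 be0'.
have outside (i1 j1 k : 'I_n) (a1 b1 : R) : (k < i1)%N || (j1 < k)%N ->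
    (i1 <= j1)%N -> pair_vec i1 j1 a1 b1 ord0 k = 0.
  by move=> hk le; rewrite mxE -!val_eqE !ifN_eq //=; lia.
have at_lo (i1 j1 : 'I_n) (a1 b1 : R) : pair_vec i1 j1 a1 b1 ord0 i1 = a1.
  by rewrite mxE eqxx.
have at_hi (i1 j1 : 'I_n) (a1 b1 : R) : (i1 < j1)%N ->
    pair_vec i1 j1 a1 b1 ord0 j1 = b1.
  by move=> lt; rewrite mxE -val_eqE ifN_eq ?eqxx //=; lia.
have ii' : i = i'.
  apply: ord_inj; apply/eqP; rewrite eqn_leq.
  apply/andP; split; rewrite leqNgt; apply/negP => lt.
    move: (eq_vec i'); rewrite at_lo outside ?lt // => al'0.
    by move: al0'; rewrite -al'0 eqxx.
  move: (eq_vec i); rewrite at_lo (outside i' j') ?lt // => al0E.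
  by move: al0; rewrite al0E eqxx.
subst i'.
have jj' : j = j'.
  apply: ord_inj; apply/eqP; rewrite eqn_leq.
  apply/andP; split; rewrite leqNgt; apply/negP => lt.
    have : be != 0 by rewrite be0; lia.
    move: (eq_vec j); rewrite (at_hi i j) ?(outside i j') ?lt ?orbT //; last by lia.
    by move=> ->; rewrite eqxx.
  have : be' != 0 by rewrite be0'; lia.
  move: (eq_vec j'); rewrite (at_hi i j') ?(outside i j) ?lt ?orbT //; last by lia.
  by move=> <-; rewrite eqxx.
subst j'; split=> //; first by rewrite -(at_lo i j al be) eq_vec at_lo.
have [lt|ge] := ltnP i j; first by rewrite -(at_hi i j al be) // eq_vec at_hi.
by move: be0 be0'; rewrite ltnNge ge => /negbFE/eqP -> /negbFE/eqP ->.
Qed.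

End TwoPointVectors.

Section MannheimWeight.
Variables (p : nat) (pi : gint).

Lemma mweight_le (beta : 'F_p) (w : nat) :
  mw_attained pi beta w -> (mweight pi beta <= w)%N.
Proof.
move=> hw; rewrite /mweight; case: ex_minnP => m _; apply.
by case: excluded_middle_informative.
Qed.

Lemma mweight0 : mweight pi (0 : 'F_p) = 0%N.
Proof.
apply/eqP; rewrite -leqn0; apply: mweight_le.
by exists 0, 0; split=> //; exists (0, 0); rewrite /gsub /gmul /= !mulr0 subrr.
Qed.

Lemma mweight_pair_vec (n : nat) (i j : 'I_n) (alpha beta : 'F_p) :
  (mweight_vec pi (pair_vec i j alpha beta) <= mweight pi alpha + mweight pi beta)%N.
Proof.
have rest (P : pred 'I_n) : (forall k, P k -> (k != i) && (k != j)) ->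
    (\sum_(k | P k) mweight pi (pair_vec i j alpha beta ord0 k) = 0)%N.
  move=> hP; rewrite big1 // => k /hP /andP[/negbTE ki /negbTE kj].
  by rewrite mxE ki kj mweight0.
rewrite /mweight_vec (bigD1 i) //= mxE eqxx leq_add2l.
have [eji|ji] := eqVneq j i; first by rewrite rest // => k; rewrite eji andbb.
rewrite (bigD1 j) /=; last by rewrite ji.
by rewrite mxE (negbTE ji) eqxx rest ?addn0 // => k /andP[/andP[-> ->]].
Qed.

End MannheimWeight.

Section FourthRootsOfUnity.
Variables (p : nat) (U : 'F_p).
Hypotheses (p_prime : prime p) (p_gt5 : (5 < p)%N) (U_sq : U ^+ 2 = -1).

Lemma natFp_neq0 (m : nat) : (0 < m < p)%N -> (m%:R : 'F_p) != 0.
Proof.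
by case/andP=> m0 mp; rewrite -(dvdn_pcharf (pchar_Fp p_prime)) gtnNdvd.
Qed.

Lemma one_neq_m1 : (1 : 'F_p) != -1.
Proof.
rewrite -subr_eq0 opprK -[1 + 1]/(2%:R); apply: natFp_neq0.
exact: (@ltn_trans 5 2 p).
Qed.

Lemma U_neq0 : U != 0.
Proof. by apply: contra_eq_neq U_sq => ->; rewrite expr0n eq_sym oppr_eq0 oner_eq0. Qed.

Lemma U_pow4 : U ^+ 4 = 1.
Proof. by rewrite -[4%N]/(2 * 2)%N exprM U_sq sqrrN expr1n. Qed.

Lemma U_pow_inj (e e' : nat) : (e < 4)%N -> (e' < 4)%N -> U ^+ e = U ^+ e' -> e = e'.
Proof.
have U_sq1 (V : 'F_p) : V ^+ 2 = 1 -> U != V.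
  by move=> V1; apply: contra_eq_neq U_sq => ->; rewrite V1 one_neq_m1.
wlog le_ee' : e e' / (e <= e')%N.
  by move=> W he he' h; case: (leqP e e') => [|/ltnW] le; [|apply/esym]; apply: W.
move=> he he'; rewrite -(subnKC le_ee') exprD -[X in X = _]mulr1.
move=> /(mulfI (expf_neq0 _ U_neq0)).
have := leq_ltn_trans (leq_subr e e') he'.
case: (e' - e)%N => [|[|[|[|//]]]] _; first by rewrite addn0.
- by rewrite expr1 => U1; move: (U_sq1 1 (expr1n _ _)); rewrite U1 eqxx.
- by rewrite U_sq => /eqP; rewrite (negbTE one_neq_m1).
- rewrite exprS U_sq mulrN1 => /eqP; rewrite eq_sym eqr_oppLR => /eqP Um1.
  by move: (U_sq1 (-1)); rewrite sqrrN expr1n Um1 eqxx => /(_ erefl).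
Qed.

(* the image U^e m in 'F_p of the Gaussian integer i^e m *)
Definition mon (e m : nat) : 'F_p := U ^+ e * m%:R.

Lemma mon_neq0 (e m : nat) : (0 < m <= 2)%N -> mon e m != 0.
Proof.
move=> /andP[m0 m2]; rewrite mulf_neq0 ?natFp_neq0 ?m0 ?expf_neq0 ?U_neq0 //=.
exact: leq_ltn_trans m2 (ltn_trans _ p_gt5).
Qed.

(* 16 = 1 would force p to divide 15 = 3 * 5 *)
Lemma sixteen_neq1 : (16%:R : 'F_p) != 1.
Proof.
rewrite -subr_eq0 -[16%N]/(15 + 1)%N natrD addrK -[15%N]/(3 * 5)%N natrM.
by rewrite mulf_neq0 // natFp_neq0 // (ltn_trans _ p_gt5).
Qed.

(* the eight elements U^e m (e < 4, m in {1, 2}) are pairwise distinct: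
   equal fourth powers give m = m', then U^e = U^e' *)
Lemma mon_inj (e e' m m' : nat) : (e < 4)%N -> (e' < 4)%N ->
  (0 < m <= 2)%N -> (0 < m' <= 2)%N -> mon e m = mon e' m' -> e = e' /\ m = m'.
Proof.
move=> he he' hm hm' eq_mon.
have m_eq : m = m'.
  have := congr1 (fun x => x ^+ 4) eq_mon.
  rewrite /mon !exprMn ![(U ^+ _) ^+ 4]exprAC U_pow4 !expr1n !mul1r -!natrX.
  move: hm hm'; clear eq_mon; case: m => [|[|[|//]]] //; case: m' => [|[|[|//]]] // _ _ /eqP.
    by rewrite eq_sym (negbTE sixteen_neq1).
  by rewrite (negbTE sixteen_neq1).
subst m'; split=> //; apply: U_pow_inj => //.
have := mon_neq0 0 hm; rewrite /mon expr0 mul1r => m0.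
by apply: (mulIf m0); apply: eq_mon.
Qed.

(* The 8 n^2 + 1 test vectors of weight <= 2, indexed by option (i, j, c, d):
   None gives 0; i = j gives the single entry U^c (d + 1) at i; i <> j gives
   U^c at min(i, j) and at max(i, j) the power U^(2d) if i < j, U^(2d+1) if
   i > j, so every pair of unit entries on two coordinates occurs once. *)
Definition code_vec (n : nat) (z : option ('I_n * 'I_n * 'I_4 * 'I_2)) : 'rV['F_p]_n :=
  if z is Some (i, j, c, d) then
    if (i < j)%N then pair_vec i j (mon c 1) (mon (2 * d) 1)
    else if (j < i)%N then pair_vec j i (mon c 1) (mon (2 * d).+1 1)
    else pair_vec i j (mon c d.+1) 0
  else 0.

Lemma succ_ord2_bounds (d : 'I_2) : (0 < d.+1 <= 2)%N.
Proof. by case: d => [[|[]]]. Qed.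

Lemma code_vec_some_neq0 (n : nat) (z : 'I_n * 'I_n * 'I_4 * 'I_2) :
  code_vec (Some z) != 0.
Proof.
case: z => [[[i j] c] d] /=; case: ifP => _; last case: ifP => _;
  by apply: pair_vec_neq0; apply: mon_neq0; rewrite ?succ_ord2_bounds.
Qed.

(* Two equal test vectors have the same support and entries (pair_vec_inj);
   the parity of the exponent at the larger coordinate recovers the order of
   i and j, and a zero second entry signals i = j. *)
Lemma code_vec_inj (n : nat) : injective (@code_vec n).
Proof.
have mon1 (e e' : nat) : mon e 1 = mon e' 1 -> (e < 4)%N -> (e' < 4)%N -> e = e'.
  by move=> /mon_inj + he he' => /(_ he he' isT isT)[].
move=> [z|] [z'|] // eq_z; first last.
- by move: (code_vec_some_neq0 z'); rewrite -eq_z eqxx.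
- by move: (code_vec_some_neq0 z); rewrite eq_z eqxx.
move: z z' eq_z => [[[i j] c] d] [[[i' j'] c'] d'] /=.
have := ltn_ord c; have := ltn_ord c'; have := ltn_ord d; have := ltn_ord d'.
case: (ltngtP i j) => [ij|ji|eij]; case: (ltngtP i' j') => [ij'|ji'|eij'];
  move=> hd' hd hc' hc /pair_vec_inj[];
  rewrite ?mon_neq0 ?succ_ord2_bounds ?eqxx ?eij ?eij' ?ltnn //; try lia.
- by move=> -> -> /mon1 ec /mon1 ed; congr (Some (_, _, _, _)); apply: ord_inj; lia.
- by move=> _ _ _ /mon1; lia.
- by move=> _ _ _ /eqP; rewrite (negbTE (mon_neq0 _ _)).
- by move=> _ _ _ /mon1; lia.
- by move=> -> -> /mon1 ec /mon1 ed; congr (Some (_, _, _, _)); apply: ord_inj; lia.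
- by move=> _ _ _ /eqP; rewrite (negbTE (mon_neq0 _ _)).
- by move=> _ _ _ /esym/eqP; rewrite (negbTE (mon_neq0 _ _)).
- by move=> _ _ _ /esym/eqP; rewrite (negbTE (mon_neq0 _ _)).
move=> -> -> /mon_inj[]; rewrite ?succ_ord2_bounds // => ec [ed] _.
by congr (Some (_, _, _, _)); apply: ord_inj.
Qed.

End FourthRootsOfUnity.

Lemma Fp_int_dvd (p : nat) (z : int) : prime p ->
  (z%:~R : 'F_p) = 0 -> exists w : int, z = w * p%:Z.
Proof. by move=> p_prime /eqP; rewrite -(dvdz_pcharf (pchar_Fp p_prime)) => /dvdzP. Qed.

Section GaussianResidues.
Variables (p : nat) (a b : int) (U : 'F_p).
Hypotheses (p_prime : prime p) (norm_ab : a * a + b * b = p%:Z)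
  (U_root : a%:~R + U * b%:~R = 0) (U_sq : U ^+ 2 = -1).

(* x + y i is divisible by pi as soon as x + y U = 0: the quotient is
   (x + y i) pi^* / p, whose coordinates are integers by the hypothesis. *)
Lemma gauss_kernel (x y : int) : x%:~R + y%:~R * U = 0 -> gdvd (a, b) (x, y).
Proof.
move=> xy_root.
have [w1 e1] : exists w, x * a + y * b = w * p%:Z.
  apply: Fp_int_dvd => //; rewrite rmorphD !rmorphM /=.
  have -> : x%:~R * a%:~R + y%:~R * b%:~R =
      a%:~R * (x%:~R + y%:~R * U) - y%:~R * U * (a%:~R + U * b%:~R)
      + y%:~R * b%:~R * (U ^+ 2 + 1) :> 'F_p by ring.
  by rewrite xy_root U_root U_sq addNr !mulr0 subr0 addr0.
have [w2 e2] : exists w, y * a - x * b = w * p%:Z.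
  apply: Fp_int_dvd => //; rewrite rmorphB !rmorphM /=.
  have -> : y%:~R * a%:~R - x%:~R * b%:~R =
      y%:~R * (a%:~R + U * b%:~R) - b%:~R * (x%:~R + y%:~R * U) :> 'F_p by ring.
  by rewrite xy_root U_root !mulr0 subr0.
have p0 : p%:Z != 0 by rewrite eqz_nat -lt0n prime_gt0.
exists (w1, w2); rewrite /gmul /=; congr pair; apply: (mulIf p0).
  have -> : (a * w1 - b * w2) * p%:Z = a * (w1 * p%:Z) - b * (w2 * p%:Z) by ring.
  by rewrite -e1 -e2 -norm_ab; ring.
have -> : (a * w2 + b * w1) * p%:Z = a * (w2 * p%:Z) + b * (w1 * p%:Z) by ring.
by rewrite -e1 -e2 -norm_ab; ring.
Qed.

Lemma mweight_repr (x y : int) :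
  (mweight (a, b) (x%:~R + y%:~R * U)%R <= absz x + absz y)%N.
Proof.
set beta := (x%:~R + _)%R; apply: mweight_le; exists x, y; split=> //.
apply: gauss_kernel; rewrite /glift [(_, _).1]/= [(_, _).2]/= subr0 intrB.
by rewrite -pmulrn natr_Zp /beta opprD addrA subrr add0r addNr.
Qed.

(* U^e m is represented by i^e m, of Mannheim weight m *)
Lemma mweight_mon (e m : nat) : (e < 4)%N -> (mweight (a, b) (mon U e m) <= m)%N.
Proof.
have mw (beta : 'F_p) (x y : int) : beta = x%:~R + y%:~R * U ->
    (absz x + absz y)%N = m -> (mweight (a, b) beta <= m)%N.
  by move=> -> <-; apply: mweight_repr.
rewrite /mon; case: e => [|[|[|[|//]]]] _.
- by apply: (mw _ m 0); rewrite ?addn0 // expr0 mul1r mul0r addr0.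
- by apply: (mw _ 0 m); rewrite ?add0n // expr1 add0r mulrC.
- by apply: (mw _ (- m%:Z) 0); rewrite ?addn0 ?abszN // U_sq mul0r addr0 mulN1r rmorphN.
- apply: (mw _ 0 (- m%:Z)); rewrite ?add0n ?abszN // exprS U_sq add0r rmorphN /=.
  by rewrite mulNr mulrN1 mulNr mulrC.
Qed.

Lemma mweight_code_vec (n : nat) (z : option ('I_n * 'I_n * 'I_4 * 'I_2)) :
  (mweight_vec (a, b) (code_vec U z) <= 2)%N.
Proof.
case: z => [[[[i j] c] d]|]; last first.
  by rewrite /mweight_vec big1 // => k _; rewrite mxE mweight0.
have [d_even d_odd] : (2 * d < 4)%N /\ ((2 * d).+1 < 4)%N by case: d => [[|[]]].
rewrite /code_vec; case: ifP => _; last case: ifP => _;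
  apply: leq_trans (mweight_pair_vec _ _ _ _ _) _.
- by apply: (@leq_add _ _ 1 1); apply: mweight_mon; rewrite ?ltn_ord.
- by apply: (@leq_add _ _ 1 1); apply: mweight_mon; rewrite ?ltn_ord.
by rewrite mweight0 addn0 (leq_trans (mweight_mon _ (ltn_ord c))) ?ltn_ord.
Qed.

End GaussianResidues.

(* a^2 + b^2 = p forces b to be a unit mod p, and U = -a/b is a root of -1 *)
Lemma gauss_sqrt_m1 (p : nat) (a b : int) : prime p -> a * a + b * b = p%:Z ->
  exists U : 'F_p, a%:~R + U * b%:~R = 0 /\ U ^+ 2 = -1.
Proof.
move=> p_prime norm_ab.
have norm0 : (a%:~R * a%:~R + b%:~R * b%:~R : 'F_p) = 0.
  by rewrite -!intrM -intrD norm_ab -pmulrn pchar_Fp_0.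
have b0 : (b%:~R : 'F_p) != 0.
  apply/eqP => b0; move: norm0; rewrite b0 mulr0 addr0 => /eqP; rewrite mulf_eq0 orbb.
  move=> /eqP /(Fp_int_dvd p_prime) [u au]; have [v bv] := Fp_int_dvd p_prime b0.
  have p0 : p%:Z != 0 by rewrite eqz_nat -lt0n prime_gt0.
  have unit_p : p%:Z * (u * u + v * v) = 1.
    by apply: (mulfI p0); rewrite mulr1 -[in RHS]norm_ab au bv; ring.
  have : (p%:Z %| 1)%Z by apply/dvdzP; exists (u * u + v * v); rewrite mulrC.
  by rewrite dvdzE /= dvdn1 => /eqP p1; move: p_prime; rewrite p1.
exists (- a%:~R / b%:~R); split; first by field.
apply: (mulIf (mulf_neq0 b0 b0)); rewrite mulN1r -(subr0 (_ * _)) -norm0; field.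
exact: b0.
Qed.

Theorem theorem5 (p : nat) (pi : gint) (n k : nat) (C : {vspace 'rV['F_p]_n}) :
  prime p -> (p %% 4 = 1)%N -> (13 <= p)%N ->
  gmul pi (gconj pi) = (p%:Z, 0%:Z) ->
  (\dim C = k)%N ->
  corrects2 pi C ->
  (8 * n ^ 2 + 1 <= p ^ (n - k))%N.
Proof.
move=> p_prime _ p_ge13 + dimC; case: pi => a b norm_pi corrects.
have norm_ab : a * a + b * b = p%:Z by case: norm_pi => <- _; rewrite mulrN opprK.
have [U [U_root U_sq]] := gauss_sqrt_m1 p_prime norm_ab.
have p_gt5 : (5 < p)%N by apply: leq_trans p_ge13.
pose T := [set x : 'rV['F_p]_n | (mweight_vec (a, b) x <= 2)%N].
have card_T : (8 * n ^ 2 + 1 <= #|T|)%N.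
  have := card_imset [set: option _] (code_vec_inj p_prime p_gt5 U_sq (n := n)).
  rewrite cardsT card_option !card_prod !card_ord => card_codes.
  rewrite (_ : 8 * n ^ 2 + 1 = (n * n * 4 * 2).+1)%N; last by lia.
  rewrite -card_codes; apply/subset_leq_card/subsetP => _ /imsetP[z _ ->].
  by rewrite inE (mweight_code_vec p_prime norm_ab U_root U_sq).
have packing : (#|T| <= #|'F_p| ^ (n - \dim C))%N.
  by apply: coset_packing => x y; rewrite !inE; apply: corrects.
by rewrite (leq_trans card_T) // -dimC; move: packing; rewrite card_Fp.
Qed.
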